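(* Let $G(\circ)$, $G(\ast)$ be groups on a set $G$ of size $n$ and let $a\in G$ with $\sigma=|a|_\circ>|a|_\ast=\tau$. Then $\mathrm{dist}_a\ge (n/\sigma)\lceil\sigma/\tau\rceil\ge n/\tau$.
   Context: $|a|_\circ$ denotes the order of $a$ in $G(\circ)$, $|a|_\ast$ its order in $G(\ast)$. $\mathrm{dist}_a=|\{b\in G: a\circ b\ne a\ast b\}|$. *)

From HB Require Import structures.
From mathcomp Require Import all_boot all_order all_algebra.
Set Implicit Arguments. Unset Strict Implicit. Unset Printing Implicit Defensive.

Definition is_group (T : Type) (op : T -> T -> T) (e : T) : Prop :=
  associative op /\ left_id e op /\ right_id e op /\
  (forall x, exists y, op x y = e /\ op y x = e).

Definition gpow (T : Type) (op : T -> T -> T) (e a : T) (k : nat) : T :=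
  iter k (op a) e.

Definition is_order (T : Type) (op : T -> T -> T) (e a : T) (k : nat) : Prop :=
  (0 < k)%N /\ gpow op e a k = e /\
  (forall j, (0 < j)%N -> (j < k)%N -> gpow op e a j <> e).

Definition dist_at (T : finType) (op1 op2 : T -> T -> T) (a : T) : nat :=
  #|[set b : T | op1 a b != op2 a b]|.

(* Let L be left multiplication by a in G(o); L^sigma is the identity.  Along
   any L-orbit, tau consecutive points can never all lie outside the set D of
   b with a o b <> a * b: otherwise the o- and *-iterations from the first of
   them agree for tau steps, forcing a^tau = 1 in G(o), against tau < sigma.
   So each sigma-periodic orbit sequence meets D at least ceil(sigma/tau)
   times per period, and since every L^j is a bijection, summing over all
   starting points counts each element of D exactly sigma times:
   sigma |D| >= n ceil(sigma/tau). *)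

From HB Require Import structures.
From mathcomp Require Import all_boot all_order all_algebra.
Import Order.TTheory GRing.Theory Num.Theory.

Section GroupIterates.
Context {T : Type} {op : T -> T -> T} {e : T}.
Hypothesis opG : is_group op e.

Lemma iter_op_gpow a k y : iter k (op a) y = op (gpow op e a k) y.
Proof.
case: opG => [opA [op1x _]].
elim: k => [|k IHk] /=; first by rewrite /gpow /= op1x.
by rewrite IHk /gpow /= opA.
Qed.

Lemma op_fixed_id g y : op g y = y -> g = e.
Proof.
case: opG => [opA [_ [opx1 opV]]] gy_y.
have [z [yz _]] := opV y.
by rewrite -(opx1 g) -yz opA gy_y.
Qed.

Lemma iter_op_inj a k : injective (iter k (op a)).
Proof.
case: opG => [opA [op1x [_ opV]]].
have [b [_ ba]] := opV a.
have op_inj : injective (op a).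
  by move=> x1 x2 ax12; rewrite -(op1x x1) -(op1x x2) -ba -!opA ax12.
elim: k => [|k IHk] x1 x2 //= /op_inj; exact: IHk.
Qed.

Lemma iter_op_gpow_id a k y : gpow op e a k = e -> iter k (op a) y = y.
Proof. by case: opG => [_ [op1x _]] ak1; rewrite iter_op_gpow ak1 op1x. Qed.

End GroupIterates.

Lemma iter_eq_prefix {A : Type} {f g : A -> A} {y : A} {k : nat} :
  (forall t, (t < k)%N -> f (iter t f y) = g (iter t f y)) ->
  iter k g y = iter k f y.
Proof.
elim: k => [//|k IHk] fg /=.
by rewrite IHk ?fg // => t /ltnW; exact: fg.
Qed.

Section PeriodicWindows.
Variables (h : nat -> nat) (s : nat).
Hypothesis h_periodic : forall j, h (j + s) = h j.

Lemma sum_periodic_shift i : \sum_(k < s) h (k + i) = \sum_(k < s) h k.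
Proof.
case: s h_periodic => [|s'] hP; first by rewrite !big_ord0.
elim: i => [|i IHi]; first by under eq_bigr do rewrite addn0.
rewrite -IHi big_ord_recr big_ord_recl /= add0n addnC; congr (_ + _).
  by rewrite addnS -addSn addnC hP.
by apply: eq_bigr => k _; rewrite /bump /= addnS addSn.
Qed.

Lemma periodic_window_bound t :
  (forall i, 0 < \sum_(k < t) h (i + k))%N -> (s <= t * \sum_(i < s) h i)%N.
Proof.
move=> hit.
rewrite -[X in (X <= _)%N]card_ord -sum1_card.
apply: (@leq_trans (\sum_(i < s) \sum_(k < t) h (i + k))).
  by apply: leq_sum => i _; exact: hit.
rewrite exchange_big /= -[X in (_ <= X * _)%N]card_ord -sum1_card big_distrl /=.
apply: leq_sum => k _; rewrite mul1n -(sum_periodic_shift k).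
by under eq_bigr do rewrite addnC.
Qed.

End PeriodicWindows.

Lemma sum_count_preimage {T : finType} (D : {set T}) (s : nat)
    {f : nat -> T -> T} :
  (forall i, injective (f i)) ->
  (\sum_x \sum_(i < s) (f i x \in D) = s * #|D|)%N.
Proof.
move=> f_inj; rewrite exchange_big /= -[X in (X * _)%N]card_ord -sum_nat_const.
apply: eq_bigr => i _.
rewrite -sum1_card [RHS](reindex_inj (f_inj i)) /= [RHS]big_mkcond /=.
by apply: eq_bigr => x _; case: (f i x \in D).
Qed.

Section CeilBounds.
Variable R : archiRealFieldType.
Local Open Scope ring_scope.

Lemma ceil_div_le (s t d : nat) :
  (0 < t)%N -> (s <= t * d)%N -> (Num.ceil (s%:R / t%:R : R))%:~R <= d%:R :> R.
Proof.
move=> t_gt0 s_le.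
rewrite -[d%:R]/(d%:Z%:~R) ler_int ceil_le_int ler_pdivrMr ?ltr0n //.
by rewrite -natrM ler_nat mulnC.
Qed.

Lemma ler_div_ceil (n s t : nat) : (0 < s)%N -> (0 < t)%N ->
  n%:R / t%:R <= n%:R / s%:R * (Num.ceil (s%:R / t%:R : R))%:~R :> R.
Proof.
move=> s_gt0 t_gt0.
have -> : n%:R / t%:R = n%:R / s%:R * (s%:R / t%:R) :> R.
  by rewrite mulrA divfK // pnatr_eq0 -lt0n.
by apply: ler_wpM2l; [rewrite divr_ge0 | exact: ceil_ge].
Qed.

End CeilBounds.

Section TwoGroups.
Context {T : finType} {op1 op2 : T -> T -> T} {e1 e2 a : T} {sigma tau : nat}.
Hypotheses (G1 : is_group op1 e1) (G2 : is_group op2 e2).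
Hypotheses (ord1 : is_order op1 e1 a sigma) (ord2 : is_order op2 e2 a tau).
Hypothesis tau_lt_sigma : (tau < sigma)%N.

Let D := [set b | op1 a b != op2 a b].
Let hits x j : nat := iter j (op1 a) x \in D.

Lemma dist_window x i : (0 < \sum_(k < tau) hits x (i + k))%N.
Proof.
case: ord1 ord2 => _ [_ sigma_min] [tau_gt0 [a_tau _]].
rewrite lt0n sum_nat_eq0; apply/forallP => /= miss.
set y := iter i (op1 a) x.
have agree t : (t < tau)%N ->
    op1 a (iter t (op1 a) y) = op2 a (iter t (op1 a) y).
  move=> lt_t_tau; have := miss (Ordinal lt_t_tau).
  by rewrite /hits /= addnC iterD inE eqb0 negbK => /eqP.
have := iter_eq_prefix agree.
rewrite (iter_op_gpow_id G2 a tau) // (iter_op_gpow G1).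
move=> /esym/(op_fixed_id G1).
exact: sigma_min.
Qed.

Lemma dist_orbit_count x : (sigma <= tau * \sum_(j < sigma) hits x j)%N.
Proof.
case: ord1 => _ [a_sigma _].
apply: periodic_window_bound; last exact: dist_window.
by move=> j; rewrite /hits iterD (iter_op_gpow_id G1 a sigma).
Qed.

Lemma card_ceil_le_dist (R : archiRealFieldType) :
  (#|T|%:R * (Num.ceil (sigma%:R / tau%:R : R))%:~R
    <= (sigma * dist_at op1 op2 a)%:R :> R)%R.
Proof.
case: ord2 => tau_gt0 _.
rewrite -(sum_count_preimage D sigma (iter_op_inj G1 a)) natr_sum.
rewrite mulr_natl -sumr_const.
by apply: ler_sum => x _; exact/ceil_div_le/dist_orbit_count.
Qed.

End TwoGroups.

Theorem lemma4p11 (T : finType) (op1 op2 : T -> T -> T) (e1 e2 : T)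
  (a : T) (sigma tau : nat) :
  is_group op1 e1 -> is_group op2 e2 ->
  is_order op1 e1 a sigma -> is_order op2 e2 a tau ->
  (tau < sigma)%N ->
  let n := #|T| in
  ((n%:R / sigma%:R) * (Num.ceil (sigma%:R / tau%:R : rat))%:~R
     <= (dist_at op1 op2 a)%:R :> rat)%R /\
  (n%:R / tau%:R <= (n%:R / sigma%:R) * (Num.ceil (sigma%:R / tau%:R : rat))%:~R
     :> rat)%R.
Proof.
move=> G1 G2 ord1 ord2 tau_lt_sigma n.
have [[tau_gt0 _] [sigma_gt0 _]] := (ord2, ord1).
split; last exact: ler_div_ceil.
rewrite mulrAC ler_pdivrMr ?ltr0n // -natrM mulnC.
exact: (card_ceil_le_dist G1 G2 ord1 ord2 tau_lt_sigma).
Qed.
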